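(* Let $k$ be a field, $Q,q\in k^\times$, $d\ge1$. If $m,n\geq 2d$ are odd, then the algebras $S^B_{Q,q}(m;d)=\mathrm{End}_{\mathcal H^B_{Q,q}(d)}(V_m^{\otimes d})$ and $S^B_{Q,q}(n;d)=\mathrm{End}_{\mathcal H^B_{Q,q}(d)}(V_n^{\otimes d})$ are Morita equivalent.
   Context: $\mathcal H^B_{Q,q}(d)$ is the algebra generated by $T_0,\dots,T_{d-1}$ with relations $(T_0+Q)(T_0-Q^{-1})=0$; $(T_i+q)(T_i-q^{-1})=0$ ($i>0$); $T_iT_{i+1}T_i=T_{i+1}T_iT_{i+1}$ ($i>0$); $T_0T_1T_0T_1=T_1T_0T_1T_0$; $T_iT_j=T_jT_i$ ($|i-j|>1$). For $N=2s$ let $\mathbb I_N=\{-\tfrac{2s-1}{2},\dots,-\tfrac12,\tfrac12,\dots,\tfrac{2s-1}{2}\}$ and for $N=2s+1$ let $\mathbb I_N=\{-s,\dots,s\}$; $V_N$ has basis $\{v_i:i\in\mathbb I_N\}$. $R_q(v_i\otimes v_j)=q^{-1}v_i\otimes v_j$ if $i=j$, $v_j\otimes v_i$ if $i<j$, $v_j\otimes v_i+(q^{-1}-q)v_i\otimes v_j$ if $i>j$; $K_Q(v_i)=Q^{-1}v_i$ if $i=0$, $v_{-i}$ if $i>0$, $v_{-i}+(Q^{-1}-Q)v_i$ if $i<0$. The algebra acts on $V_N^{\otimes d}$ from the right: $T_i$ ($i>0$) by $R_q$ on factors $i,i+1$, $T_0$ by $K_Q$ on the first factor. *)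

From mathcomp Require Import all_boot all_order all_algebra.
Set Implicit Arguments.
Unset Strict Implicit.
Unset Printing Implicit Defensive.
Import Order.TTheory GRing.Theory Num.Theory.
Local Open Scope ring_scope.

Section SchurB.
Variable k : fieldType.

(* Basis of V_N^{(x) d}: d-tuples of indices.  The index set I_N is encoded
   by 'I_N via a |-> (2a - (N-1))/2, an order-preserving bijection; the
   index -a corresponds to N-1-a and the index 0 (N odd) to 2a = N-1. *)
Definition tens (N d : nat) := {ffun 'I_d -> 'I_N}.
Definition tdim (N d : nat) := #|{ffun 'I_d -> 'I_N}|.

(* coefficient of v_b in K_Q(v_a) *)
Definition coefK (Q : k) (N : nat) (a b : 'I_N) : k :=
  if (2 * a == N.-1)%N then (b == a)%:R * Q^-1
  else if (N.-1 < 2 * a)%N then (val b == N.-1 - a)%N%:R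
  else (val b == N.-1 - a)%N%:R + (b == a)%:R * (Q^-1 - Q).

Definition prev_ord (d : nat) (i : 'I_d) : 'I_d :=
  Ordinal (leq_ltn_trans (leq_pred i) (ltn_ord i)).

(* coefficient of the basis tensor w' in (w . T_i)  (right action;
   i = 0: K_Q on the first factor; i > 0: R_q on factors i, i+1, 1-based) *)
Definition actT (Q q : k) (N d : nat) (i : 'I_d) (w w' : tens N d) : k :=
  if val i == 0%N then
    ([forall j, (j != i) ==> (w' j == w j)])%:R * coefK Q (w i) (w' i)
  else
    let p := prev_ord i in
    let sw : tens N d := [ffun j => if j == p then w i
                                   else if j == i then w p else w j] in
    let a := w p in let b := w i in
    if a == b then (w' == w)%:R * q^-1
    else if (val a < val b)%N then (w' == sw)%:R
    else (w' == sw)%:R + (w' == w)%:R * (q^-1 - q).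

(* matrix of the linear map v |-> v . T_i on column vectors *)
Definition Tmx (Q q : k) (N d : nat) (i : 'I_d) : 'M[k]_(tdim N d) :=
  \matrix_(r, c) actT Q q i (enum_val c) (enum_val r).

(* S^B_{Q,q}(N;d) = End_{H^B_{Q,q}(d)}(V_N^{(x) d}): matrices commuting with
   the action of all generators T_0, ..., T_{d-1}; the algebra structure is
   composition = matrix product. *)
Definition schurB (Q q : k) (N d : nat) : pred 'M[k]_(tdim N d) :=
  fun A => [forall i : 'I_d, A *m Tmx Q q N i == Tmx Q q N i *m A].

Section Modules.
Variables (n : nat) (A : pred 'M[k]_n).

Definition rmod_axiom (m : nat) (act : 'M[k]_n -> 'M[k]_m) : Prop :=
  [/\ act 1%:M = 1%:M,
      forall a b, a \in A -> b \in A -> act (a *m b) = act a *m act b,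
      forall a b, a \in A -> b \in A -> act (a + b) = act a + act b &
      forall (c : k) a, a \in A -> act (c *: a) = c *: act a].

(* a module: k^rdim (row vectors), with v . a = v *m ract a *)
Record rmod := RMod {
  rdim : nat;
  ract : 'M[k]_n -> 'M[k]_rdim;
  ractP : rmod_axiom ract }.

Definition is_hom (M N : rmod) (f : 'M[k]_(rdim M, rdim N)) : Prop :=
  forall a, a \in A -> ract M a *m f = f *m ract N a.

End Modules.

Record functor n1 n2 (A : pred 'M[k]_n1) (B : pred 'M[k]_n2) := Functor {
  Fo : rmod A -> rmod B;
  Fh : forall M N : rmod A,
         'M[k]_(rdim M, rdim N) -> 'M[k]_(rdim (Fo M), rdim (Fo N)) }.

Definition is_functor n1 n2 (A : pred 'M[k]_n1) (B : pred 'M[k]_n2)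
  (F : functor A B) : Prop :=
  [/\ forall M N f, @is_hom _ A M N f -> is_hom (Fh F f),
      forall M : rmod A, Fh F (1%:M : 'M_(rdim M)) = 1%:M,
      forall M N P f g, @is_hom _ A M N f -> @is_hom _ A N P g ->
         Fh F (f *m g) = Fh F f *m Fh F g &
      forall M N (c : k) f g, @is_hom _ A M N f -> @is_hom _ A M N g ->
         Fh F (c *: f + g) = c *: Fh F f + Fh F g].

Definition iso_id n1 n2 (A : pred 'M[k]_n1) (B : pred 'M[k]_n2)
  (F : functor A B) (G : functor B A) : Prop :=
  exists eta : forall M : rmod A, 'M[k]_(rdim (Fo G (Fo F M)), rdim M),
    (forall M, is_hom (eta M) /\
       exists g : 'M[k]_(rdim M, rdim (Fo G (Fo F M))),
         [/\ is_hom g, eta M *m g = 1%:M & g *m eta M = 1%:M]) /\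
    (forall M N f, @is_hom _ A M N f ->
       Fh G (Fh F f) *m eta N = eta M *m f).

Definition morita n1 n2 (A : pred 'M[k]_n1) (B : pred 'M[k]_n2) : Prop :=
  exists (F : functor A B) (G : functor B A),
    [/\ is_functor F, is_functor G, iso_id F G & iso_id G F].

End SchurB.
Arguments schurB {k} Q q N d _.
Arguments Tmx {k} Q q N d i.

From mathcomp Require Import all_boot all_order all_algebra.
From mathcomp Require Import fingroup perm zify.
Set Implicit Arguments.
Unset Strict Implicit.
Unset Printing Implicit Defensive.
Import Order.TTheory GRing.Theory Num.Theory.
Local Open Scope ring_scope.

(* Write V_N for V_N^{(x) d}, so that S^B(N;d) is the commutant of the action
   on V_N; maps are written on the right, as matrices acting on row vectors.
   If V_n is a direct summand of copies of V_m, through intertwiners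
   y_j : V_n -> V_m and x_j : V_m -> V_n with sum_j y_j x_j = 1, a module M
   over S^B(m;d) is sent to the image of the idempotent block matrix
   [M(x_i y_j)]_ij on M^J, on which b in S^B(n;d) acts by [M(x_i b y_j)]_ij.
   When V_m and V_n are summands of copies of each other, the two functors so
   obtained are mutually inverse up to natural isomorphism.
   For N = 2c+1 the basis tensors of V_(N+2) with no factor of index t or -t
   span a stable subspace isomorphic to V_N: both K_Q and R_q only permute
   factors or negate one index, with coefficients that depend only on the signs
   and the relative order of the indices. Conversely, if d <= c, a basis tensor
   of V_(N+2) misses some absolute value t in 1..c+1, and sorting basis tensors
   by the least such t splits V_(N+2) into stable pieces, each isomorphic to a
   subspace of V_N. *)

Section Blocks.
Variables (k : fieldType) (J : finType).

Lemma eq_mxvec_index m n (i i' : 'I_m) (a a' : 'I_n) :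
  (mxvec_index i a == mxvec_index i' a') = (i == i') && (a == a').
Proof.
apply/eqP/andP => [|[/eqP-> /eqP->] //].
by move=> /(congr1 val) /= /val_inj /enum_rank_inj [-> ->].
Qed.

Definition blk d (j : J) : 'M[k]_(d, #|J| * d) :=
  \matrix_(a, c) (c == mxvec_index (enum_rank j) a)%:R.

Lemma blk_trblk d (i j : J) : blk d i *m (blk d j)^T = (i == j)%:R *: 1%:M.
Proof.
apply/matrixP => a b; rewrite !mxE (bigD1 (mxvec_index (enum_rank i) a)) //=.
rewrite big1 => [|c /negbTE nc]; last by rewrite !mxE nc mul0r.
rewrite !mxE eqxx mul1r addr0 eq_mxvec_index (inj_eq enum_rank_inj) eq_sym.
by rewrite -natrM mulnb.
Qed.

Lemma sum_trblk_blk d : \sum_j (blk d j)^T *m blk d j = 1%:M.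
Proof.
apply/matrixP => c c'; rewrite summxE.
case/mxvec_indexP: c => i a; rewrite -[i]enum_valK.
rewrite (bigD1 (enum_val i)) //= big1 => [|j nji]; last first.
  rewrite !mxE big1 // => b _; rewrite !mxE eq_mxvec_index (inj_eq enum_rank_inj).
  by rewrite (eq_sym (enum_val i)) (negbTE nji) mul0r.
rewrite !mxE (bigD1 a) //= big1 => [|b nba]; last first.
  by rewrite !mxE eq_mxvec_index eqxx eq_sym (negbTE nba) mul0r.
by rewrite !mxE !eqxx mul1r !addr0 eq_sym.
Qed.

Definition colblk d p (F : J -> 'M[k]_(d, p)) : 'M[k]_(#|J| * d, p) :=
  \sum_j (blk d j)^T *m F j.
Definition rowblk p d (F : J -> 'M[k]_(p, d)) : 'M[k]_(p, #|J| * d) :=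
  \sum_j F j *m blk d j.
Definition diagblk d1 d2 (f : 'M[k]_(d1, d2)) : 'M[k]_(#|J| * d1, #|J| * d2) :=
  colblk (fun j => f *m blk d2 j).

Lemma blk_colblk d p (F : J -> 'M[k]_(d, p)) j : blk d j *m colblk F = F j.
Proof.
rewrite mulmx_sumr (bigD1 j) //= big1 => [|i nij]; last first.
  by rewrite mulmxA blk_trblk eq_sym (negbTE nij) scale0r mul0mx.
by rewrite mulmxA blk_trblk eqxx scale1r mul1mx addr0.
Qed.

Lemma rowblk_colblk p d q (F : J -> 'M[k]_(p, d)) (G : J -> 'M[k]_(d, q)) :
  rowblk F *m colblk G = \sum_j F j *m G j.
Proof.
by rewrite mulmx_suml; apply: eq_bigr => j _; rewrite -mulmxA blk_colblk.
Qed.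

Lemma colblk_mul d p q (F : J -> 'M[k]_(d, p)) (B : 'M[k]_(p, q)) :
  colblk F *m B = colblk (fun j => F j *m B).
Proof. by rewrite mulmx_suml; apply: eq_bigr => j _; rewrite mulmxA. Qed.

Lemma mul_rowblk p q d (B : 'M[k]_(p, q)) (F : J -> 'M[k]_(q, d)) :
  B *m rowblk F = rowblk (fun j => B *m F j).
Proof. by rewrite mulmx_sumr; apply: eq_bigr => j _; rewrite mulmxA. Qed.

Lemma sum_rowblk (L : Type) (s : seq L) (P : pred L) p d
    (F : L -> J -> 'M[k]_(p, d)) :
  \sum_(l <- s | P l) rowblk (F l) = rowblk (fun j => \sum_(l <- s | P l) F l j).
Proof.
by rewrite exchange_big; apply: eq_bigr => j _; rewrite mulmx_suml.
Qed.

Lemma colblk_lin d p c (F G : J -> 'M[k]_(d, p)) :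
  colblk (fun j => c *: F j + G j) = c *: colblk F + colblk G.
Proof.
rewrite /colblk scaler_sumr -big_split; apply: eq_bigr => j _ /=.
by rewrite mulmxDr scalemxAr.
Qed.

Lemma rowblk_lin p d c (F G : J -> 'M[k]_(p, d)) :
  rowblk (fun j => c *: F j + G j) = c *: rowblk F + rowblk G.
Proof.
rewrite /rowblk scaler_sumr -big_split; apply: eq_bigr => j _ /=.
by rewrite mulmxDl scalemxAl.
Qed.

Lemma diagblk_colblk d1 d2 p (f : 'M[k]_(d1, d2)) (G : J -> 'M[k]_(d2, p)) :
  diagblk f *m colblk G = colblk (fun j => f *m G j).
Proof.
by rewrite colblk_mul; apply: eq_bigr => j _; rewrite -mulmxA blk_colblk.
Qed.

Lemma rowblk_diagblk p d1 d2 (F : J -> 'M[k]_(p, d1)) (f : 'M[k]_(d1, d2)) :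
  rowblk F *m diagblk f = rowblk (fun j => F j *m f).
Proof. by rewrite rowblk_colblk; apply: eq_bigr => j _; rewrite mulmxA. Qed.

Lemma diagblk1 d : diagblk (1%:M : 'M[k]_d) = 1%:M.
Proof.
by rewrite -(sum_trblk_blk d); apply: eq_bigr => j _; rewrite mul1mx.
Qed.

Lemma diagblk_mul d1 d2 d3 (f : 'M[k]_(d1, d2)) (g : 'M[k]_(d2, d3)) :
  diagblk f *m diagblk g = diagblk (f *m g).
Proof.
by rewrite diagblk_colblk /diagblk /colblk; apply: eq_bigr => j _; rewrite !mulmxA.
Qed.

Lemma diagblk_lin d1 d2 c (f g : 'M[k]_(d1, d2)) :
  diagblk (c *: f + g) = c *: diagblk f + diagblk g.
Proof.
by rewrite -colblk_lin /colblk; apply: eq_bigr => j _; rewrite mulmxDl scalemxAl.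
Qed.

End Blocks.

Section IdempotentSplitting.
Variables (k : fieldType) (p : nat) (E : 'M[k]_p).
Hypothesis idemE : E *m E = E.

Definition row_base_rinv : 'M[k]_(p, \rank E) := E *m pinvmx (row_base E).

Lemma row_base_rinv_mul : row_base_rinv *m row_base E = E.
Proof. by rewrite /row_base_rinv mulmxKpV // eq_row_base. Qed.

Lemma row_base_idem : row_base E *m E = row_base E.
Proof.
have sub_base : (row_base E <= E)%MS by rewrite eq_row_base.
by rewrite -{1}(mulmxKpV sub_base) -mulmxA idemE mulmxKpV.
Qed.

Lemma row_base_rinvK : row_base E *m row_base_rinv = 1%:M.
Proof.
apply: (row_free_inj (row_base_free E)) => /=.
by rewrite /row_base_rinv mulmxA row_base_idem mulmxKpV ?mul1mx.
Qed.

End IdempotentSplitting.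

Section Intertwiners.
Variables (k : fieldType) (I : finType).

Definition intertw n1 n2 (T1 : I -> 'M[k]_n1) (T2 : I -> 'M[k]_n2)
    (x : 'M[k]_(n1, n2)) :=
  forall i, x *m T2 i = T1 i *m x.

Definition commutant n (T : I -> 'M[k]_n) : pred 'M[k]_n :=
  fun a => [forall i, a *m T i == T i *m a].

Lemma commutantP n (T : I -> 'M[k]_n) a :
  reflect (intertw T T a) (a \in commutant T).
Proof. by apply: (iffP forallP) => H i; apply/eqP/H. Qed.

Section Closure.
Variables (n1 n2 n3 : nat) (T1 : I -> 'M[k]_n1) (T2 : I -> 'M[k]_n2).
Variable (T3 : I -> 'M[k]_n3).

Lemma intertwM x y : intertw T1 T2 x -> intertw T2 T3 y -> intertw T1 T3 (x *m y).
Proof. by move=> Hx Hy i; rewrite -mulmxA Hy !mulmxA Hx. Qed.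

Lemma intertw0 : intertw T1 T2 0.
Proof. by move=> i; rewrite mul0mx mulmx0. Qed.

Lemma intertwD x y : intertw T1 T2 x -> intertw T1 T2 y -> intertw T1 T2 (x + y).
Proof. by move=> Hx Hy i; rewrite mulmxDl mulmxDr Hx Hy. Qed.

Lemma intertwZ c x : intertw T1 T2 x -> intertw T1 T2 (c *: x).
Proof. by move=> Hx i; rewrite -scalemxAl Hx scalemxAr. Qed.

End Closure.

Lemma intertw1 n (T : I -> 'M[k]_n) : intertw T T 1%:M.
Proof. by move=> i; rewrite mul1mx mulmx1. Qed.

Lemma commutant0 n (T : I -> 'M[k]_n) : 0 \in commutant T.
Proof. exact/commutantP/intertw0. Qed.

Lemma commutant1 n (T : I -> 'M[k]_n) : 1%:M \in commutant T.
Proof. exact/commutantP/intertw1. Qed.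

End Intertwiners.

Ltac intertw_tac :=
  apply/commutantP; repeat first
    [ eapply intertwM | apply: intertwZ | apply: intertw1
    | match goal with H : forall j, intertw _ _ _ |- _ => apply: H end
    | apply/commutantP; eassumption ].

Section CommutantModules.
Variables (k : fieldType) (I : finType) (n : nat) (T : I -> 'M[k]_n).
Variable M : rmod (commutant T).

Local Notation A := (commutant T).
Local Notation act := (ract M).

Lemma ract1 : act 1%:M = 1%:M. Proof. by case: (ractP M). Qed.

Lemma ractM a b : a \in A -> b \in A -> act (a *m b) = act a *m act b.
Proof. by case: (ractP M) => _ H _ _; apply: H. Qed.

Lemma ractD a b : a \in A -> b \in A -> act (a + b) = act a + act b.
Proof. by case: (ractP M) => _ _ H _; apply: H. Qed.

Lemma ractZ c a : a \in A -> act (c *: a) = c *: act a.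
Proof. by case: (ractP M) => _ _ _ H; apply: H. Qed.

Lemma ract0 : act 0 = 0.
Proof. by rewrite -(scale0r 1%:M) ractZ ?scale0r ?commutant1. Qed.

Lemma ract_sum (L : Type) (s : seq L) (P : pred L) (F : L -> 'M_n) :
  (forall l, P l -> F l \in A) ->
  act (\sum_(l <- s | P l) F l) = \sum_(l <- s | P l) act (F l).
Proof.
move=> AF; pose ract_of a b := a \in A /\ act a = b.
suff [] : ract_of (\sum_(l <- s | P l) F l) (\sum_(l <- s | P l) act (F l)) by [].
apply: big_ind2 => [|a1 b1 a2 b2 [A1 <-] [A2 <-]|l Pl].
- by split; [apply: commutant0 | apply: ract0].
- by split; [apply/commutantP/intertwD; apply/commutantP | apply: ractD].
- by split; [apply: AF|].
Qed.

End CommutantModules.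

Lemma is_hom_inv (k : fieldType) n (A : pred 'M[k]_n) (M N : rmod A)
    (f : 'M_(rdim M, rdim N)) (g : 'M_(rdim N, rdim M)) :
  is_hom f -> f *m g = 1%:M -> g *m f = 1%:M -> is_hom g.
Proof.
move=> homf fg gf a Aa.
rewrite -[ract N a *m g]mul1mx -gf -mulmxA (mulmxA f) -homf //.
by rewrite -mulmxA fg mulmx1.
Qed.

Section Transfer.
Variables (k : fieldType) (I : finType) (n1 n2 : nat).
Variables (T1 : I -> 'M[k]_n1) (T2 : I -> 'M[k]_n2).
Variables (J : finType) (x : J -> 'M[k]_(n1, n2)) (y : J -> 'M[k]_(n2, n1)).
Hypotheses (xT : forall j, intertw T1 T2 (x j)) (yT : forall j, intertw T2 T1 (y j)).
Hypothesis yx1 : \sum_j y j *m x j = 1%:M.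

Local Notation A := (commutant T1).
Local Notation B := (commutant T2).

Section Module.
Variable M : rmod A.
Local Notation act := (ract M).

Definition blockact (b : 'M_n2) : 'M[k]_(#|J| * rdim M) :=
  colblk (fun i => rowblk (fun j => act (x i *m b *m y j))).

Lemma blockactM b b' : b \in B -> b' \in B ->
  blockact b *m blockact b' = blockact (b *m b').
Proof.
move=> Bb Bb'; rewrite colblk_mul; apply: eq_bigr => i _; congr (_ *m _).
rewrite rowblk_colblk; under eq_bigr do rewrite mul_rowblk.
rewrite sum_rowblk; apply: eq_bigr => j _; congr (_ *m _).
transitivity (act (\sum_l x i *m b *m (y l *m x l) *m (b' *m y j))).
  rewrite ract_sum => [|l _]; last by intertw_tac.
  by apply: eq_bigr => l _; rewrite -ractM; [rewrite !mulmxA | intertw_tac..].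
by rewrite -mulmx_suml -mulmx_sumr yx1 mulmx1 !mulmxA.
Qed.

Lemma blockact_lin c b b' : b \in B -> b' \in B ->
  blockact (c *: b + b') = c *: blockact b + blockact b'.
Proof.
move=> Bb Bb'; rewrite -colblk_lin; apply: eq_bigr => i _; congr (_ *m _).
rewrite -rowblk_lin; apply: eq_bigr => j _; congr (_ *m _).
by rewrite mulmxDr mulmxDl -scalemxAr -scalemxAl ractD ?ractZ //; intertw_tac.
Qed.

Lemma blockact0 : blockact 0 = 0.
Proof.
apply: big1 => i _; rewrite [rowblk _]big1 ?mulmx0 // => j _.
by rewrite mul0mx ract0 mul0mx.
Qed.

Definition blockunit := blockact 1%:M.

Lemma blockunit_idem : blockunit *m blockunit = blockunit.
Proof. by rewrite blockactM ?commutant1 ?mulmx1. Qed.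

Lemma blockunit_mul b : b \in B -> blockunit *m blockact b = blockact b.
Proof. by move=> Bb; rewrite blockactM ?commutant1 ?mul1mx. Qed.

Lemma mul_blockunit b : b \in B -> blockact b *m blockunit = blockact b.
Proof. by move=> Bb; rewrite blockactM ?commutant1 ?mulmx1. Qed.

Local Notation base := (row_base blockunit).
Local Notation coord := (row_base_rinv blockunit).

Definition transfer_act b : 'M[k]_(\rank blockunit) := base *m blockact b *m coord.

Lemma transfer_act_axiom : rmod_axiom B transfer_act.
Proof.
have B0 := commutant0 T2.
split => [|b b' Bb Bb'|b b' Bb Bb'|c b Bb]; rewrite /transfer_act.
- by rewrite row_base_idem ?row_base_rinvK // blockunit_idem.
- have -> : base *m blockact b *m coord *m (base *m blockact b' *m coord) =
      base *m (blockact b *m (coord *m base)) *m blockact b' *m coord.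
    by rewrite !mulmxA.
  by rewrite row_base_rinv_mul mul_blockunit // -(mulmxA _ (blockact b)) blockactM.
- by rewrite -[b]scale1r blockact_lin // !scale1r mulmxDr mulmxDl.
- by rewrite -[c *: b]addr0 blockact_lin // blockact0 addr0 -scalemxAr -scalemxAl.
Qed.

Definition transfer_mod := RMod transfer_act_axiom.

End Module.

Lemma blockact_diagblk (M N : rmod A) (f : 'M_(rdim M, rdim N)) b :
  is_hom f -> b \in B -> blockact M b *m diagblk J f = diagblk J f *m blockact N b.
Proof.
move=> homf Bb; rewrite colblk_mul diagblk_colblk.
apply: eq_bigr => i _; congr (_ *m _).
rewrite rowblk_diagblk mul_rowblk; apply: eq_bigr => j _; congr (_ *m _).
by rewrite homf //; intertw_tac.
Qed.

Local Notation base M := (row_base (blockunit M)).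
Local Notation coord M := (row_base_rinv (blockunit M)).

Definition transfer_hom (M N : rmod A) (f : 'M_(rdim M, rdim N)) :
    'M_(rdim (transfer_mod M), rdim (transfer_mod N)) :=
  base M *m diagblk J f *m coord N.

Definition transfer : functor A B := Functor transfer_hom.

Lemma transfer_is_functor : is_functor transfer.
Proof.
split => /=.
- move=> M N f homf b Bb /=; rewrite /transfer_act /transfer_hom.
  have -> : base M *m blockact M b *m coord M *m (base M *m diagblk J f *m coord N) =
     base M *m (blockact M b *m (coord M *m base M)) *m diagblk J f *m coord N.
    by rewrite !mulmxA.
  have -> : base M *m diagblk J f *m coord N *m (base N *m blockact N b *m coord N) =
     base M *m diagblk J f *m ((coord N *m base N) *m blockact N b) *m coord N.
    by rewrite !mulmxA.
  rewrite !row_base_rinv_mul mul_blockunit // blockunit_mul //.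
  by rewrite -(mulmxA _ (blockact M b)) blockact_diagblk // !mulmxA.
- by move=> M; rewrite /transfer_hom diagblk1 mulmx1 row_base_rinvK ?blockunit_idem.
- move=> M N P f g homf homg; rewrite /transfer_hom.
  have -> : base M *m diagblk J f *m coord N *m (base N *m diagblk J g *m coord P) =
     base M *m (diagblk J f *m (coord N *m base N)) *m diagblk J g *m coord P.
    by rewrite !mulmxA.
  rewrite row_base_rinv_mul -blockact_diagblk ?commutant1 // mulmxA.
  by rewrite row_base_idem ?blockunit_idem // -diagblk_mul !mulmxA.
- move=> M N c f g _ _; rewrite /transfer_hom diagblk_lin.
  by rewrite mulmxDr mulmxDl -scalemxAr -scalemxAl.
Qed.

End Transfer.

Section Iso.
Variables (k : fieldType) (I : finType) (n1 n2 : nat).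
Variables (T1 : I -> 'M[k]_n1) (T2 : I -> 'M[k]_n2).
Variables (J : finType) (x : J -> 'M[k]_(n1, n2)) (y : J -> 'M[k]_(n2, n1)).
Hypotheses (xT : forall j, intertw T1 T2 (x j)) (yT : forall j, intertw T2 T1 (y j)).
Hypothesis yx1 : \sum_j y j *m x j = 1%:M.
Variables (L : finType) (u : L -> 'M[k]_(n2, n1)) (v : L -> 'M[k]_(n1, n2)).
Hypotheses (uT : forall l, intertw T2 T1 (u l)) (vT : forall l, intertw T1 T2 (v l)).
Hypothesis vu1 : \sum_l v l *m u l = 1%:M.

Local Notation A := (commutant T1).
Local Notation FM M := (transfer_mod xT yT yx1 M).

Section Composite.
Variable M : rmod A.
Local Notation act := (ract M).
Local Notation E := (blockunit x y M).
Local Notation E' := (blockunit u v (FM M)).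

Definition colact l := colblk (fun i : J => act (x i *m u l)).
Definition rowact l := rowblk (fun i : J => act (v l *m y i)).

Lemma blockact_sandwich l a l' : a \in A ->
  blockact x y M (u l *m a *m v l') = colact l *m act a *m rowact l'.
Proof.
move=> Aa; rewrite !colblk_mul; apply: eq_bigr => i _; congr (_ *m _).
rewrite mul_rowblk; apply: eq_bigr => i' _; congr (_ *m _).
by rewrite -!ractM; [rewrite !mulmxA | intertw_tac..].
Qed.

Lemma sum_rowact_colact : \sum_l rowact l *m colact l = 1%:M.
Proof.
rewrite -ract1 -vu1 ract_sum => [|l _]; last by intertw_tac.
apply: eq_bigr => l _; rewrite rowblk_colblk.
transitivity (act (\sum_i v l *m (y i *m x i) *m u l)).
  rewrite ract_sum => [|i _]; last by intertw_tac.
  by apply: eq_bigr => i _; rewrite -ractM; [rewrite !mulmxA | intertw_tac..].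
by rewrite -mulmx_suml -mulmx_sumr yx1 mulmx1.
Qed.

Lemma blockunit_colact l : E *m colact l = colact l.
Proof.
rewrite colblk_mul; apply: eq_bigr => i _; congr (_ *m _).
rewrite rowblk_colblk.
transitivity (act (\sum_i' x i *m 1%:M *m (y i' *m x i') *m u l)).
  rewrite ract_sum => [|i' _]; last by intertw_tac.
  by apply: eq_bigr => i' _; rewrite -ractM; [rewrite !mulmxA | intertw_tac..].
by rewrite -mulmx_suml -mulmx_sumr yx1 !mulmx1.
Qed.

Local Notation base := (row_base E).
Local Notation coord := (row_base_rinv E).

Definition gf_col : 'M[k]_(#|L| * \rank E, rdim M) :=
  colblk (fun l => base *m colact l).
Definition gf_row : 'M[k]_(rdim M, #|L| * \rank E) :=
  rowblk (fun l => rowact l *m coord).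

Lemma gf_row_col : gf_row *m gf_col = 1%:M.
Proof.
rewrite rowblk_colblk -sum_rowact_colact; apply: eq_bigr => l _.
by rewrite -mulmxA (mulmxA coord) row_base_rinv_mul blockunit_colact.
Qed.

Lemma gf_col_row : gf_col *m gf_row = E'.
Proof.
rewrite colblk_mul; apply: eq_bigr => l _; congr (_ *m _).
rewrite mul_rowblk; apply: eq_bigr => l' _; congr (_ *m _).
by rewrite /= /transfer_act blockact_sandwich ?commutant1 // ract1 mulmx1 !mulmxA.
Qed.

Lemma blockact_gf_col a : a \in A ->
  blockact u v (FM M) a *m gf_col = gf_col *m act a.
Proof.
move=> Aa; rewrite !colblk_mul; apply: eq_bigr => l _; congr (_ *m _).
rewrite rowblk_colblk.
transitivity (\sum_l' base *m colact l *m act a *m (rowact l' *m colact l')).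
  apply: eq_bigr => l' _; rewrite /= /transfer_act blockact_sandwich //.
  have -> : base *m (colact l *m act a *m rowact l') *m coord *m (base *m colact l') =
      base *m (colact l *m act a *m rowact l') *m ((coord *m base) *m colact l').
    by rewrite !mulmxA.
  by rewrite row_base_rinv_mul blockunit_colact !mulmxA.
by rewrite -mulmx_sumr sum_rowact_colact mulmx1.
Qed.

Local Notation base' := (row_base E').
Local Notation coord' := (row_base_rinv E').

Definition gf_iso : 'M_(rdim (transfer_mod uT vT vu1 (FM M)), rdim M) :=
  base' *m gf_col.
Definition gf_iso_inv : 'M_(rdim M, rdim (transfer_mod uT vT vu1 (FM M))) :=
  gf_row *m coord'.

Lemma blockunit_gf_col : E' *m gf_col = gf_col.
Proof. by rewrite blockact_gf_col ?commutant1 // ract1 mulmx1. Qed.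

Lemma gf_iso_hom : is_hom gf_iso.
Proof.
move=> a Aa; rewrite /= /transfer_act /gf_iso.
have -> : base' *m blockact u v (FM M) a *m coord' *m (base' *m gf_col) =
    base' *m blockact u v (FM M) a *m ((coord' *m base') *m gf_col).
  by rewrite !mulmxA.
by rewrite row_base_rinv_mul blockunit_gf_col -mulmxA blockact_gf_col // mulmxA.
Qed.

Lemma gf_isoK : gf_iso *m gf_iso_inv = 1%:M.
Proof.
rewrite /gf_iso /gf_iso_inv.
have -> : base' *m gf_col *m (gf_row *m coord') = base' *m (gf_col *m gf_row) *m coord'.
  by rewrite !mulmxA.
have idemE' : E' *m E' = E' := blockunit_idem uT vT vu1 (FM M).
by rewrite gf_col_row row_base_idem ?row_base_rinvK.
Qed.

Lemma gf_iso_invK : gf_iso_inv *m gf_iso = 1%:M.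
Proof.
rewrite /gf_iso /gf_iso_inv.
have -> : gf_row *m coord' *m (base' *m gf_col) =
    gf_row *m ((coord' *m base') *m gf_col).
  by rewrite !mulmxA.
by rewrite row_base_rinv_mul blockunit_gf_col gf_row_col.
Qed.

End Composite.
Local Notation base M := (row_base (blockunit x y M)).
Local Notation coord M := (row_base_rinv (blockunit x y M)).
Local Notation base' M := (row_base (blockunit u v (FM M))).
Local Notation coord' M := (row_base_rinv (blockunit u v (FM M))).

Lemma colact_natural (M N : rmod A) (f : 'M_(rdim M, rdim N)) l :
  is_hom f -> diagblk J f *m colact N l = colact M l *m f.
Proof.
move=> homf; rewrite diagblk_colblk colblk_mul; apply: eq_bigr => i _.
by rewrite homf //; intertw_tac.
Qed.

Lemma gf_col_natural (M N : rmod A) (f : 'M_(rdim M, rdim N)) : is_hom f ->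
  diagblk L (transfer_hom xT yT yx1 f) *m gf_col N = gf_col M *m f.
Proof.
move=> homf; rewrite diagblk_colblk colblk_mul; apply: eq_bigr => l _.
congr (_ *m _); rewrite /transfer_hom.
have -> : base M *m diagblk J f *m coord N *m (base N *m colact N l) =
    base M *m diagblk J f *m ((coord N *m base N) *m colact N l).
  by rewrite !mulmxA.
by rewrite row_base_rinv_mul blockunit_colact -mulmxA colact_natural // mulmxA.
Qed.

Lemma gf_iso_natural (M N : rmod A) (f : 'M_(rdim M, rdim N)) : is_hom f ->
  transfer_hom uT vT vu1 (transfer_hom xT yT yx1 f) *m gf_iso N = gf_iso M *m f.
Proof.
move=> homf; rewrite /gf_iso {1}/transfer_hom.
set Ff := diagblk L (transfer_hom xT yT yx1 f).
have -> : base' M *m Ff *m coord' N *m (base' N *m gf_col N) =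
    base' M *m Ff *m ((coord' N *m base' N) *m gf_col N).
  by rewrite !mulmxA.
by rewrite row_base_rinv_mul blockunit_gf_col -mulmxA gf_col_natural // mulmxA.
Qed.

Lemma transfer_iso : iso_id (transfer xT yT yx1) (transfer uT vT vu1).
Proof.
exists gf_iso; split=> [M|M N f homf]; last exact: gf_iso_natural.
split; first exact: gf_iso_hom.
exists (gf_iso_inv M); split; [|exact: gf_isoK|exact: gf_iso_invK].
exact: is_hom_inv (gf_iso_hom M) (gf_isoK M) (gf_iso_invK M).
Qed.

End Iso.

Section SkipPair.
Local Open Scope nat_scope.
Variables (c t : nat).
Hypotheses (t_gt0 : 0 < t) (t_le : t <= c.+1).

(* The indices of V_(2c+1) inside those of V_(2c+3), skipping -t and t. *)
Definition skip2 b := bump (c.+1 + t) (bump (c.+1 - t) b).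

Lemma ltn_skip2 a b : (skip2 a < skip2 b) = (a < b).
Proof. rewrite /skip2 /bump; lia. Qed.

Lemma eqn_skip2 a b : (skip2 a == skip2 b) = (a == b).
Proof. rewrite /skip2 /bump; lia. Qed.

Lemma skip2_lt b : b < c.*2.+1 -> skip2 b < (c.+1).*2.+1.
Proof. rewrite /skip2 /bump; lia. Qed.

Lemma skip2_mid b : (2 * skip2 b == (c.+1).*2) = (2 * b == c.*2).
Proof. rewrite /skip2 /bump; lia. Qed.

Lemma skip2_gt_mid b : ((c.+1).*2 < 2 * skip2 b) = (c.*2 < 2 * b).
Proof. rewrite /skip2 /bump; lia. Qed.

Lemma skip2_opp a b : b <= c.*2 ->
  (skip2 a == (c.+1).*2 - skip2 b) = (a == c.*2 - b).
Proof. rewrite /skip2 /bump; lia. Qed.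

Lemma skip2_avoid b : (skip2 b != c.+1 - t) && (skip2 b != c.+1 + t).
Proof. rewrite /skip2 /bump; lia. Qed.

Lemma skip2_onto a : a < (c.+1).*2.+1 -> a != c.+1 - t -> a != c.+1 + t ->
  exists2 b, b < c.*2.+1 & skip2 b = a.
Proof.
move=> a_lt a_ne1 a_ne2.
by exists (a - (c.+1 - t < a) - (c.+1 + t < a)); rewrite /skip2 /bump; lia.
Qed.

End SkipPair.

Section SkipTensor.
Variables (k : fieldType) (Q : k) (c t : nat).
Hypotheses (t_gt0 : (0 < t)%N) (t_le : (t <= c.+1)%N).
Local Notation N := c.*2.+1.
Local Notation N' := (c.+1).*2.+1.

Definition ord_skip2 (b : 'I_N) : 'I_N' := inord (skip2 c t b).

Lemma ord_skip2E b : ord_skip2 b = skip2 c t b :> nat.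
Proof. by rewrite inordK // skip2_lt. Qed.

Lemma ord_skip2_inj : injective ord_skip2.
Proof.
move=> a b /(congr1 (@nat_of_ord _)) /eqP.
by rewrite !ord_skip2E eqn_skip2 // => /eqP /val_inj.
Qed.

Lemma coefK_skip2 (a b : 'I_N) : coefK Q (ord_skip2 a) (ord_skip2 b) = coefK Q a b.
Proof.
have a_le : (a <= c.*2)%N by rewrite -ltnS.
rewrite /coefK /= !ord_skip2E skip2_mid ?skip2_gt_mid ?skip2_opp //.
by rewrite (inj_eq ord_skip2_inj).
Qed.

Lemma ltn_ord_skip2 (a b : 'I_N) : (ord_skip2 a < ord_skip2 b)%N = (a < b)%N.
Proof. by rewrite !ord_skip2E ltn_skip2. Qed.

End SkipTensor.

Section TensorMap.
Variables (k : fieldType) (Q q : k) (d N N' : nat) (f : 'I_N -> 'I_N').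
Hypotheses (f_inj : injective f) (f_mono : forall a b, (f a < f b)%N = (a < b)%N).
Hypothesis coefK_f : forall a b, coefK Q (f a) (f b) = coefK Q a b.

Definition tmap (w : tens N d) : tens N' d := [ffun j => f (w j)].

Lemma tmap_inj : injective tmap.
Proof.
move=> w w' /ffunP eq_ww'; apply/ffunP => j; apply: f_inj.
by have := eq_ww' j; rewrite !ffunE.
Qed.

Lemma actT_tmap (i : 'I_d) w w' : actT Q q i (tmap w) (tmap w') = actT Q q i w w'.
Proof.
rewrite /actT; case: ifP => _.
  rewrite !ffunE coefK_f; congr (_%:R * _).
  by under eq_forallb => j do rewrite !ffunE (inj_eq f_inj).
have -> : [ffun j => if j == prev_ord i then tmap w i
                     else if j == i then tmap w (prev_ord i) else tmap w j] =
    tmap [ffun j => if j == prev_ord i then w i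
                    else if j == i then w (prev_ord i) else w j].
  by apply/ffunP => j; rewrite !ffunE; case: ifP => //; case: ifP.
by rewrite !(inj_eq tmap_inj) !ffunE (inj_eq f_inj) f_mono.
Qed.

End TensorMap.

Lemma prev_ord_neq d (i : 'I_d) : (val i == 0%N) = false -> prev_ord i != i.
Proof. by case: i => -[|i] //= lt _; rewrite -val_eqE /=; lia. Qed.

Section Support.
Variables (k : fieldType) (Q q : k) (d c : nat).
Local Notation N := c.*2.+1.

(* a : 'I_(2c+1) encodes the index a - c of the paper. *)
Definition absidx (a : nat) : nat := (a - c) + (c - a).

Definition used (w : tens N d) (t : nat) := [exists j, absidx (w j) == t].

Lemma coefK_absidx (a b : 'I_N) : coefK Q a b != 0 -> absidx b = absidx a.
Proof.
have a_lt := ltn_ord a.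
have [->//|nba] := eqVneq b a.
have [opp _|nopp] := eqVneq (b : nat) (c.*2 - a)%N; first by rewrite /absidx opp; lia.
rewrite /coefK /= (negbTE nba) (negbTE nopp) !mul0r addr0.
by case: ifP => _; rewrite ?eqxx //; case: ifP => _; rewrite eqxx.
Qed.

Lemma actT_absidx (i : 'I_d) (w w' : tens N d) : actT Q q i w w' != 0 ->
  exists s : {perm 'I_d}, forall j, absidx (w' j) = absidx (w (s j)).
Proof.
rewrite /actT; case: ifP => i0.
  case: (boolP [forall j, _]) => [/forallP eq_off_i|]; last by rewrite mul0r eqxx.
  rewrite mul1r => /coefK_absidx abs_i; exists 1%g => j; rewrite perm1.
  by have [->//|nji] := eqVneq j i; have := eq_off_i j; rewrite nji => /eqP->.
set sw := [ffun j => _] => nz.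
have w'E : (w' == w) || (w' == sw).
  apply: contraR nz => /norP[/negbTE n1 /negbTE n2].
  by rewrite n1 n2 !mul0r addr0 !if_same eqxx.
case/orP: w'E => /eqP->; first by exists 1%g => j; rewrite perm1.
have ip : i != prev_ord i by rewrite eq_sym prev_ord_neq ?i0.
exists (tperm (prev_ord i) i) => j; rewrite /sw ffunE.
case: tpermP => [->|->|/eqP njp /eqP nji]; rewrite ?eqxx ?(negbTE ip) //.
by rewrite (negbTE njp) (negbTE nji).
Qed.

Lemma actT_used (i : 'I_d) (w w' : tens N d) t : actT Q q i w w' != 0 ->
  used w' t = used w t.
Proof.
case/actT_absidx => s abs_s; apply/existsP/existsP => [[j /eqP <-]|[j /eqP <-]].
  by exists (s j); rewrite abs_s.
by exists (s^-1 j)%g; rewrite abs_s permKV.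
Qed.

End Support.

Lemma sum_enum_val_eq (R : pzSemiRingType) (T : finType) (F : 'I_#|T| -> R) w :
  \sum_r (enum_val r == w)%:R * F r = F (enum_rank w).
Proof.
rewrite (bigD1 (enum_rank w)) //= enum_rankK eqxx mul1r big1 ?addr0 // => r nr.
rewrite (_ : (enum_val r == w) = false) ?mul0r //.
by apply: contraNF nr => /eqP <-; rewrite enum_valK.
Qed.

Lemma sum_enum_val_eq_r (R : comPzSemiRingType) (T : finType) (F : 'I_#|T| -> R) w :
  \sum_r F r * (enum_val r == w)%:R = F (enum_rank w).
Proof.
by rewrite -[RHS](sum_enum_val_eq F w); apply: eq_bigr => r _; rewrite mulrC.
Qed.

Section SkipEmbedding.
Variables (k : fieldType) (Q q : k) (d c t : nat).
Hypotheses (t_gt0 : (0 < t)%N) (t_le : (t <= c.+1)%N).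
Local Notation N := c.*2.+1.
Local Notation N' := (c.+1).*2.+1.
Local Notation skipw := (tmap (ord_skip2 (c := c) t) (d := d)).

Lemma absidx_eqt a : (absidx c.+1 a == t) = (a == c.+1 - t)%N || (a == c.+1 + t)%N.
Proof. rewrite /absidx; lia. Qed.

Lemma used_skip2 w : used (skipw w) t = false.
Proof.
apply/existsP => -[j]; rewrite ffunE absidx_eqt ord_skip2E //.
by case/andP: (skip2_avoid t_gt0 t_le (w j)) => /negbTE-> /negbTE->.
Qed.

Lemma unused_skip2 (u : tens N' d) : ~~ used u t -> exists w, u = skipw w.
Proof.
move=> /existsPn unused.
have /fin_all_exists[f uf] j : exists b : 'I_N, u j = ord_skip2 t b.
  have := unused j; rewrite absidx_eqt negb_or => /andP[ne1 ne2].
  have [b b_lt skip_b] := skip2_onto t_gt0 t_le (ltn_ord (u j)) ne1 ne2.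
  by exists (Ordinal b_lt); apply: val_inj; rewrite /= ord_skip2E.
by exists [ffun j => f j]; apply/ffunP => j; rewrite !ffunE.
Qed.

Lemma actT_skip2 (i : 'I_d) w w' : actT Q q i (skipw w) (skipw w') = actT Q q i w w'.
Proof.
apply: actT_tmap; [exact: ord_skip2_inj | exact: ltn_ord_skip2 | exact: coefK_skip2].
Qed.

Definition skipmx : 'M[k]_(tdim N' d, tdim N d) :=
  \matrix_(r, r') (enum_val r == skipw (enum_val r'))%:R.

Lemma skipmx_intertw : intertw (Tmx Q q N' d) (Tmx Q q N d) skipmx.
Proof.
move=> i; apply/matrixP => r r'; rewrite !mxE.
under eq_bigr do rewrite !mxE; under [RHS]eq_bigr do rewrite !mxE.
rewrite sum_enum_val_eq_r enum_rankK.
have [used_r|/unused_skip2[w ->]] := boolP (used (enum_val r) t).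
  rewrite big1 => [|r'' _]; last first.
    rewrite (_ : (enum_val r == _) = false) ?mul0r //.
    by apply: contraTF used_r => /eqP->; rewrite used_skip2.
  by apply/esym/eqP; apply: contraTT used_r => /actT_used->; rewrite used_skip2.
under eq_bigr do rewrite (inj_eq (tmap_inj (ord_skip2_inj t_gt0 t_le))) eq_sym.
by rewrite sum_enum_val_eq enum_rankK actT_skip2.
Qed.

Lemma trmx_skipmx_intertw : intertw (Tmx Q q N d) (Tmx Q q N' d) skipmx^T.
Proof.
move=> i; apply/matrixP => r' r; rewrite !mxE.
under eq_bigr do rewrite !mxE; under [RHS]eq_bigr do rewrite !mxE.
rewrite sum_enum_val_eq enum_rankK.
have [used_r|/unused_skip2[w ->]] := boolP (used (enum_val r) t).
  rewrite big1 => [|r'' _]; last first.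
    rewrite (_ : (enum_val r == _) = false) ?mulr0 //.
    by apply: contraTF used_r => /eqP->; rewrite used_skip2.
  by apply/eqP; apply: contraTT used_r => /actT_used<-; rewrite used_skip2.
under eq_bigr do rewrite (inj_eq (tmap_inj (ord_skip2_inj t_gt0 t_le))) eq_sym.
by rewrite sum_enum_val_eq_r enum_rankK actT_skip2.
Qed.

Lemma skipmxK : skipmx^T *m skipmx = 1%:M.
Proof.
apply/matrixP => r r'; rewrite !mxE; under eq_bigr do rewrite !mxE.
rewrite sum_enum_val_eq enum_rankK (inj_eq (tmap_inj (ord_skip2_inj t_gt0 t_le))).
by rewrite (inj_eq enum_val_inj).
Qed.

End SkipEmbedding.

Section LeastUnused.
Variables (k : fieldType) (Q q : k) (d c : nat).
Local Notation N' := (c.+1).*2.+1.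
Local Notation used := (@used d c.+1).

Definition least_unused (u : tens N' d) (t : nat) :=
  ~~ used u t && [forall t' : 'I_t, (0 < t')%N ==> used u t'].

Lemma actT_least_unused (i : 'I_d) u u' t : actT Q q i u u' != 0 ->
  least_unused u' t = least_unused u t.
Proof.
move=> nz; rewrite /least_unused (actT_used _ nz); congr (_ && _).
by apply: eq_forallb => t'; rewrite (actT_used _ nz).
Qed.

Lemma least_unused_uniq u t1 t2 : (0 < t1)%N -> (0 < t2)%N ->
  least_unused u t1 -> least_unused u t2 -> t1 = t2.
Proof.
wlog lt12 : t1 t2 / (t1 < t2)%N => [hwlog|].
  by case: (ltngtP t1 t2) => [lt|lt|//] *; [apply: hwlog | apply/esym/hwlog].
move=> t1_gt0 _ /andP[unused1 _] /andP[_ /forallP used_below].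
by have := used_below (Ordinal lt12); rewrite /= t1_gt0 (negbTE unused1).
Qed.

Lemma exists_unused u : (d <= c)%N -> exists n, (n < c.+1)%N && ~~ used u n.+1.
Proof.
move=> dc; have [/existsP[n unused_n]|/existsPn all_used] :=
  boolP [exists n : 'I_c.+1, ~~ used u n.+1]; first by exists n; rewrite ltn_ord.
(* pigeonhole: d factors cannot use all the c.+1 absolute values *)
pose F (j : 'I_d) : 'I_c.+1 := inord (absidx c.+1 (u j)).-1.
suff : (#|'I_c.+1| <= #|'I_d|)%N by rewrite !card_ord; lia.
apply: leq_trans (leq_image_card F 'I_d); apply/subset_leq_card/subsetP => n _.
have /existsP[j /eqP abs_j] := negbNE (all_used n).
by apply/imageP; exists j => //; apply: val_inj; rewrite /F abs_j /= inordK.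
Qed.

Lemma least_unused_exists u : (d <= c)%N -> exists tau : 'I_c.+1, least_unused u tau.+1.
Proof.
move=> /(exists_unused u) ex_unused.
have [m /andP[m_lt unused_m] min_m] := ex_minnP ex_unused.
exists (Ordinal m_lt); rewrite /least_unused unused_m; apply/forallP => -[t' /= t'_lt].
apply/implyP => t'_gt0; apply: contraT => unused_t'; exfalso.
by have := min_m t'.-1; rewrite prednK // unused_t' andbT; lia.
Qed.

Definition unusedmx t : 'M[k]_(tdim N' d) :=
  diag_mx (\row_r (least_unused (enum_val r) t)%:R).

Lemma unusedmx_intertw t : intertw (Tmx Q q N' d) (Tmx Q q N' d) (unusedmx t).
Proof.
move=> i; rewrite mul_diag_mx mul_mx_diag; apply/matrixP => r r'; rewrite !mxE.
have [->|nz] := eqVneq (actT Q q i (enum_val r') (enum_val r)) 0.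
  by rewrite mulr0 mul0r.
by rewrite (actT_least_unused _ nz) mulrC.
Qed.

Lemma unusedmx_idem t : unusedmx t *m unusedmx t = unusedmx t.
Proof.
rewrite mulmx_diag; congr diag_mx; apply/rowP => r; rewrite !mxE.
by case: least_unused; rewrite ?mulr1 ?mulr0.
Qed.

Lemma unusedmx_skipmx t (t_gt0 : (0 < t)%N) (t_le : (t <= c.+1)%N) :
  unusedmx t *m skipmx k d c t *m (skipmx k d c t)^T = unusedmx t.
Proof.
rewrite -mulmxA mul_diag_mx; apply/matrixP => r r'; rewrite !mxE.
case: (boolP (least_unused _ t)) => [lu|_]; last by rewrite mul0r mul0rn.
have [w uw] := unused_skip2 t_gt0 t_le (proj1 (andP lu)).
under eq_bigr do rewrite !mxE uw (inj_eq (tmap_inj (ord_skip2_inj t_gt0 t_le))) eq_sym.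
by rewrite sum_enum_val_eq enum_rankK -uw (inj_eq enum_val_inj) eq_sym mul1r mulr1n.
Qed.

Lemma sum_unusedmx : (d <= c)%N -> \sum_(tau < c.+1) unusedmx tau.+1 = 1%:M.
Proof.
move=> dc; rewrite -raddf_sum -diag_const_mx; congr diag_mx; apply/rowP => r.
rewrite !mxE summxE; under eq_bigr do rewrite mxE.
have [tau lu] := least_unused_exists (enum_val r) dc.
rewrite (bigD1 tau) //= lu big1 ?addr0 // => tau' ntau.
case: (boolP (least_unused _ _)) => // lu'; case/eqP: ntau; apply: val_inj.
by have := least_unused_uniq (ltn0Sn _) (ltn0Sn _) lu' lu; case.
Qed.

End LeastUnused.

Section Summands.
Variables (k : fieldType) (I : finType).

(* v |-> (v *m y j)_j embeds T2 into copies of T1, with retraction sum_j x j. *)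
Definition summand n2 n1 (T2 : I -> 'M[k]_n2) (T1 : I -> 'M[k]_n1) : Prop :=
  exists (J : finType) (x : J -> 'M[k]_(n1, n2)) (y : J -> 'M[k]_(n2, n1)),
    [/\ forall j, intertw T1 T2 (x j), forall j, intertw T2 T1 (y j) &
        \sum_j y j *m x j = 1%:M].

Lemma summand_refl n (T : I -> 'M[k]_n) : summand T T.
Proof.
exists 'I_1, (fun _ => 1%:M), (fun _ => 1%:M); split=> [_|_|]; try exact: intertw1.
by rewrite big_ord1 mulmx1.
Qed.

Lemma summand_trans n1 n2 n3 (T1 : I -> 'M[k]_n1) (T2 : I -> 'M[k]_n2)
    (T3 : I -> 'M[k]_n3) :
  summand T3 T2 -> summand T2 T1 -> summand T3 T1.
Proof.
move=> [J2 [x2 [y2 [xT2 yT2 yx2]]]] [J1 [x1 [y1 [xT1 yT1 yx1]]]].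
exists (J1 * J2)%type, (fun p => x1 p.1 *m x2 p.2), (fun p => y2 p.2 *m y1 p.1).
split=> [p|p|]; try exact: intertwM.
rewrite -(pair_big xpredT xpredT (fun a b => y2 b *m y1 a *m (x1 a *m x2 b))) /=.
rewrite exchange_big /= -yx2; apply: eq_bigr => j2 _.
under eq_bigr do rewrite !mulmxA -(mulmxA (y2 j2)).
by rewrite -mulmx_suml -mulmx_sumr yx1 mulmx1.
Qed.

Lemma morita_summand n1 n2 (T1 : I -> 'M[k]_n1) (T2 : I -> 'M[k]_n2) :
  summand T2 T1 -> summand T1 T2 -> morita (commutant T1) (commutant T2).
Proof.
move=> [J [x [y [xT yT yx1]]]] [L [u [v [uT vT vu1]]]].
exists (transfer xT yT yx1), (transfer uT vT vu1).
by split; [exact: transfer_is_functor | exact: transfer_is_functor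
          | exact: transfer_iso | exact: transfer_iso].
Qed.

End Summands.

Section OddSummands.
Variables (k : fieldType) (Q q : k) (d : nat).
Local Notation V N := (Tmx Q q N d).

Lemma summand_skip c : summand (V c.*2.+1) (V (c.+1).*2.+1).
Proof.
exists 'I_1, (fun _ => skipmx k d c 1), (fun _ => (skipmx k d c 1)^T).
split=> [_|_|]; [exact: skipmx_intertw | exact: trmx_skipmx_intertw |].
by rewrite big_ord1 skipmxK.
Qed.

Lemma summand_unused c : (d <= c)%N -> summand (V (c.+1).*2.+1) (V c.*2.+1).
Proof.
move=> dc; pose X (tau : 'I_c.+1) := skipmx k d c tau.+1.
pose P (tau : 'I_c.+1) := unusedmx k d c tau.+1.
exists 'I_c.+1, (fun tau => (X tau)^T *m P tau), (fun tau => P tau *m X tau).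
split=> [tau|tau|].
- by apply: intertwM; [apply: trmx_skipmx_intertw | apply: unusedmx_intertw].
- by apply: intertwM; [apply: unusedmx_intertw | apply: skipmx_intertw].
- rewrite -(sum_unusedmx k dc); apply: eq_bigr => tau _.
  by rewrite mulmxA unusedmx_skipmx // unusedmx_idem.
Qed.

Lemma summand_up c n : summand (V c.*2.+1) (V (c + n).*2.+1).
Proof.
elim: n => [|n IHn]; first by rewrite addn0; apply: summand_refl.
by rewrite addnS; apply: summand_trans IHn (summand_skip _).
Qed.

Lemma summand_down c n : (d <= c)%N -> summand (V (c + n).*2.+1) (V c.*2.+1).
Proof.
move=> dc; elim: n => [|n IHn]; first by rewrite addn0; apply: summand_refl.
by rewrite addnS; apply: summand_trans (summand_unused _) IHn; lia.
Qed.

Lemma summand_odd c1 c2 : (d <= c1)%N -> (d <= c2)%N ->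
  summand (V c1.*2.+1) (V c2.*2.+1).
Proof.
move=> dc1 dc2; have [le12|/ltnW le21] := leqP c1 c2.
  by rewrite -(subnKC le12); apply: summand_up.
by rewrite -(subnKC le21); apply: summand_down.
Qed.

End OddSummands.

Unset Implicit Arguments.

Theorem corollary3p11 (k : fieldType) (Q q : k) (d m n : nat) :
  Q != 0 -> q != 0 -> (1 <= d)%N ->
  odd m -> odd n -> (2 * d <= m)%N -> (2 * d <= n)%N ->
  morita (schurB Q q m d) (schurB Q q n d).
Proof.
move=> _ _ _ odd_m odd_n dm dn.
rewrite -(odd_double_half m) -(odd_double_half n) odd_m odd_n.
have dm2 : (d <= m./2)%N by move: dm; rewrite -{1}(odd_double_half m) odd_m; lia.
have dn2 : (d <= n./2)%N by move: dn; rewrite -{1}(odd_double_half n) odd_n; lia.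
by apply: morita_summand; apply: summand_odd.
Qed.
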